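(* Let $M$ be a loopless matroid of rank $d+1$, and let $\{F_1,\dots,F_d\}$ and $\{G_1,\dots,G_d\}$ be multisets of flats of $M$ of rank at least $2$ such that both $t_{F_1}\cdots t_{F_d}$ and $t_{G_1}\cdots t_{G_d}$ lie in the support of $VP^\nabla_M$. If $G_d$ appears more times in $\{G_1,\dots,G_d\}$ than in $\{F_1,\dots,F_d\}$, then there exists a flat $F_m$ appearing more times in $\{F_1,\dots,F_d\}$ than in $\{G_1,\dots,G_d\}$ such that $t_{F_1}\cdots t_{F_d}t_{G_d}/t_{F_m}$ lies in the support of $VP^\nabla_M$.
   Context: $VP^\nabla_M(\underline t)=\sum_{(F_1,\dots,F_d)}t_{F_1}\cdots t_{F_d}$, the sum over ordered $d$-tuples of nonempty flats satisfying $\operatorname{rk}_M(\bigcup_{j\in J}F_j)\ge|J|+1$ for all nonempty $J\subseteq\{1,\dots,d\}$ (this is the volume polynomial $\int_M(\sum_F t_Fh_F)^d$ of the Chow ring of $M$ in its simplicial generators). Hence a monomial $t_{F_1}\cdots t_{F_d}$ lies in the support of $VP^\nabla_M$ if and only if the multiset $\{F_1,\dots,F_d\}$ satisfies this rank condition. *)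

From mathcomp Require Import all_boot.
Set Implicit Arguments. Unset Strict Implicit. Unset Printing Implicit Defensive.

Definition is_matroid_rank (T : finType) (rk : {set T} -> nat) : Prop :=
  [/\ forall A : {set T}, rk A <= #|A|,
      forall A B : {set T}, A \subset B -> rk A <= rk B &
      forall A B : {set T}, rk (A :|: B) + rk (A :&: B) <= rk A + rk B].

Definition loopless (T : finType) (rk : {set T} -> nat) : Prop :=
  forall x : T, rk [set x] = 1.

Definition is_flat (T : finType) (rk : {set T} -> nat) (F : {set T}) : Prop :=
  forall x : T, x \notin F -> rk F < rk (x |: F).

(* A multiset of flats {F_1,...,F_d}, listed as a sequence s, is in the support
   of VP^nabla_M (M of rank d+1) iff it has d elements, all nonempty flats,
   and rk(U_{j in J} F_j) >= |J| + 1 for every nonempty J. *)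
Definition in_VP_support (T : finType) (rk : {set T} -> nat) (d : nat)
    (s : seq {set T}) : Prop :=
  [/\ size s = d,
      forall F, F \in s -> is_flat rk F /\ F != set0 &
      forall J : {set 'I_(size s)}, J != set0 ->
        #|J| + 1 <= rk (\bigcup_(j in J) nth set0 s j)].

From mathcomp Require Import all_boot fingroup perm.
Set Implicit Arguments. Unset Strict Implicit. Unset Printing Implicit Defensive.

(* Put H := G_d in front of F and call a set J of positions of H :: F tight
   when it contains the position of H and the flats at J span rank at most #|J|.
   By submodularity tight sets are closed under intersection, and all positions
   form a tight set because rk M = d + 1; let J0 be the least tight set.  The
   flats at J0 cannot form a sub-multiset of G, since the rank condition for G
   would give them rank at least #|J0| + 1; so some flat F_m at a position of
   J0 occurs more often in F than in G, and F_m <> H by the multiplicity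
   hypothesis.  Deleting one copy of F_m from H :: F restores the rank
   condition: a violating set of positions must contain H (F satisfies the
   condition) and avoid that copy of F_m, so it would be a tight set not
   containing J0. *)

Lemma nth_rem (A : eqType) (x0 x : A) (s : seq A) k :
  nth x0 (rem x s) k = nth x0 s (bump (index x s) k).
Proof.
elim: s k => [|y s IHs] k /=; first by rewrite !nth_nil.
case: eqVneq => [_|_]; first by rewrite /bump leq0n.
by case: k => [|k] //=; rewrite IHs bumpS.
Qed.

Lemma enum_set_filter (I : finType) (P : pred I) : enum [set i | P i] = filter P (enum I).
Proof. by rewrite /enum_mem -filter_predI; apply: eq_filter => i; rewrite !inE andbT. Qed.

Lemma subseq_enumP (A : eqType) (x0 : A) (s t : seq A) :
  subseq t s <->
  exists K : {set 'I_(size s)}, t = [seq nth x0 s k | k : 'I_(size s) <- enum K].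
Proof.
have maskE m :
    mask m s = [seq nth x0 s k | k : 'I_(size s) <- enum [set k : 'I_(size s) | nth false m k]].
  by rewrite -[in LHS](mkseq_nth x0 s) /mkseq -val_enum_ord -map_comp -map_mask
             mask_enum_ord enum_set_filter.
split=> [/subseqP[m _ ->]|[K ->]]; first by exists [set k : 'I_(size s) | nth false m k].
apply/subseqP; exists [seq k \in K | k <- enum 'I_(size s)].
  by rewrite size_map size_enum_ord.
rewrite maskE; congr map; apply: eq_enum => k.
by rewrite inE (nth_map k) ?size_enum_ord // nth_ord_enum.
Qed.

Section RankCondition.
Variables (T : finType) (rk : {set T} -> nat).

Local Notation rkU s J := (rk (\bigcup_(j in J) nth set0 s j)).

Definition rank_cond (s : seq {set T}) :=
  forall J : {set 'I_(size s)}, J != set0 -> #|J| + 1 <= rkU s J.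

Definition rank_cond_off (s : seq {set T}) (p : 'I_(size s)) :=
  forall J : {set 'I_(size s)}, J != set0 -> p \notin J -> #|J| + 1 <= rkU s J.
Arguments rank_cond_off : clear implicits.

Lemma rank_cond_submultiset (s u : seq {set T}) :
  rank_cond s -> u != [::] -> (forall Y, count_mem Y u <= count_mem Y s) ->
  size u + 1 <= rk (\bigcup_(Y <- u) Y).
Proof.
move=> rc_s u_nil /count_subseqP[_ /(subseq_enumP set0)[K ->] perm_uK].
have K_ne0 : K != set0.
  by rewrite -card_gt0 cardE -(size_map (fun k : 'I_(size s) => nth set0 s k))
             -(perm_size perm_uK) lt0n size_eq0.
rewrite (perm_size perm_uK) (perm_big _ perm_uK) big_map big_enum size_map -cardE /=.
exact: rc_s.
Qed.

Lemma rank_cond_off_swap (s : seq {set T}) (m p : 'I_(size s)) :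
  nth set0 s m = nth set0 s p -> rank_cond_off s m -> rank_cond_off s p.
Proof.
move=> s_mp rc_m J J_ne0 pJ.
have nth_swap j : nth set0 s (tperm m p j) = nth set0 s j.
  by case: tpermP => [->|->|].
have := rc_m (tperm m p @: J).
rewrite card_imset ?big_imset /=; [|exact: in2W perm_inj|exact: perm_inj].
under eq_bigr do rewrite nth_swap.
apply.
  by rewrite -card_gt0 card_imset ?card_gt0 //; exact: perm_inj.
by rewrite -{1}(tpermR m p) mem_imset //; exact: perm_inj.
Qed.

Lemma rank_cond_offE (s s' : seq {set T}) (p : 'I_(size s)) :
  size s' = (size s).-1 -> (forall k, nth set0 s' k = nth set0 s (bump p k)) ->
  rank_cond s' <-> rank_cond_off s p.
Proof.
move=> size_s' nth_s'.
pose f k := lift p (cast_ord size_s' k).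
have f_inj : injective f by move=> k1 k2 /lift_inj /cast_ord_inj.
have card_f (J : {set 'I_(size s')}) : #|f @: J| = #|J| by rewrite (card_imset _ f_inj).
have rkU_f (J : {set 'I_(size s')}) : rkU s (f @: J) = rkU s' J.
  by rewrite big_imset /=; [under eq_bigr do rewrite -nth_s' | exact: in2W f_inj].
split=> [rc_s' J J_ne0 pJ | rc_s J J_ne0].
  have J_img : J = f @: (f @^-1: J).
    apply/setP => j; apply/idP/imsetP => [jJ | [k]]; last by rewrite inE => ? ->.
    have [k j_k|j_p] := unliftP p j; last by rewrite -j_p jJ in pJ.
    by exists (cast_ord (esym size_s') k); rewrite /f ?inE cast_ordKV -j_k.
  rewrite J_img card_f rkU_f; apply: rc_s'.
  by rewrite -card_gt0 -card_f -J_img card_gt0.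
rewrite -card_f -rkU_f; apply: rc_s.
  by rewrite -card_gt0 card_f card_gt0.
by apply/imsetP => -[k _ /eqP]; rewrite (negbTE (neq_lift _ _)).
Qed.

Section TightSets.

Hypothesis rk_mono : forall A B : {set T}, A \subset B -> rk A <= rk B.
Hypothesis rk_submod : forall A B : {set T}, rk (A :|: B) + rk (A :&: B) <= rk A + rk B.

Variables (s : seq {set T}) (p : 'I_(size s)).
Hypothesis rc_off_p : rank_cond_off s p.
Hypothesis rk_p : 1 < rk (nth set0 s p).
Hypothesis rk_setT : rk [set: T] <= size s.

Definition tight (J : {set 'I_(size s)}) := (p \in J) && (rkU s J <= #|J|).

Lemma rkU_mono (J K : {set 'I_(size s)}) : J \subset K -> rkU s J <= rkU s K.
Proof.
move=> /subsetP JK; apply: rk_mono; apply/bigcupsP => j jJ.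
exact: bigcup_sup (JK j jJ).
Qed.

Lemma card_le_rkU (J : {set 'I_(size s)}) : p \in J -> #|J| <= rkU s J.
Proof.
move=> pJ; rewrite (cardsD1 p) pJ.
have [->|J'_ne0] := eqVneq (J :\ p) set0.
  by rewrite cards0 addn0 (leq_trans (ltnW rk_p)) // rk_mono // (bigcup_sup p).
rewrite add1n -addn1 (leq_trans (rc_off_p J'_ne0 _)) ?rkU_mono ?subsetDl //.
by rewrite !inE eqxx.
Qed.

Lemma tightI (J K : {set 'I_(size s)}) : tight J -> tight K -> tight (J :&: K).
Proof.
move=> /andP[pJ rkJ] /andP[pK rkK]; rewrite /tight inE pJ pK /=.
rewrite -(leq_add2l #|J :|: K|) cardsUI (leq_trans _ (leq_add rkJ rkK)) //.
apply: leq_trans (rk_submod _ _); apply: leq_add.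
  by rewrite -bigcup_setU card_le_rkU // inE pJ.
apply: rk_mono; apply/bigcupsP => j; rewrite inE => /andP[jJ jK].
by rewrite subsetI !(bigcup_sup j).
Qed.

Lemma tightT : tight setT.
Proof. by rewrite /tight inE cardsT card_ord (leq_trans (rk_mono (subsetT _))). Qed.

Definition tight_core := \bigcap_(J | tight J) J.

Lemma tight_core_tight : tight tight_core.
Proof. by apply: (big_ind tight) => //; [exact: tightT | exact: tightI]. Qed.

Lemma rank_cond_off_tight_core m : m \in tight_core -> rank_cond_off s m.
Proof.
move=> m_core J J_ne0 mJ; have [pJ|] := boolP (p \in J); last exact: rc_off_p.
rewrite leqNgt addn1 ltnS; apply/negP => rkJ.
have /subsetP/(_ m m_core) : tight_core \subset J by apply: bigcap_inf; rewrite /tight pJ.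
by rewrite (negbTE mJ).
Qed.

Lemma tight_core_excess (G : seq {set T}) : rank_cond G ->
  exists2 m, m \in tight_core & count_mem (nth set0 s m) G < count_mem (nth set0 s m) s.
Proof.
move=> rc_G; have /andP[p_core rk_core] := tight_core_tight.
set u := [seq nth set0 s j | j : 'I_(size s) <- enum tight_core].
have u_sub : subseq u s by apply/(subseq_enumP set0); exists tight_core.
have [Y ltY | no_excess] := pickP (fun Y => count_mem Y G < count_mem Y u).
  have /mapP[m] : Y \in u by rewrite -has_pred1 has_count (leq_ltn_trans _ ltY).
  rewrite mem_enum => m_core Y_m; exists m => //.
  by rewrite -Y_m (leq_trans ltY) ?leq_count_subseq.
have u_nil : u != [::].
  by rewrite -size_eq0 size_map -cardE -lt0n card_gt0; apply/set0Pn; exists p.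
have u_le Y : count_mem Y u <= count_mem Y G by rewrite leqNgt no_excess.
have := rank_cond_submultiset rc_G u_nil u_le.
by rewrite big_map big_enum size_map -cardE /= leqNgt addn1 ltnS rk_core.
Qed.

End TightSets.

End RankCondition.

Theorem proposition5p15 (T : finType) (rk : {set T} -> nat) (d : nat)
  (F G : seq {set T}) :
  is_matroid_rank rk -> loopless rk -> rk [set: T] = d.+1 ->
  (forall H, H \in F -> is_flat rk H /\ 2 <= rk H) ->
  (forall H, H \in G -> is_flat rk H /\ 2 <= rk H) ->
  in_VP_support rk d F -> in_VP_support rk d G ->
  count_mem (nth set0 G d.-1) F < count_mem (nth set0 G d.-1) G ->
  exists2 Fm, Fm \in F &
    count_mem Fm G < count_mem Fm F /\
    in_VP_support rk d (nth set0 G d.-1 :: rem Fm F).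
Proof.
move=> [_ rk_mono rk_submod] _ rkT _ rk2_G [size_F flat_F rc_F] [size_G flat_G rc_G].
set H := nth set0 G d.-1 => excess_H.
have d_gt0 : 0 < d.
  by rewrite -size_G (leq_trans _ (count_size (pred1 H) G)) // (leq_ltn_trans _ excess_H).
have H_G : H \in G by rewrite mem_nth // size_G prednK.
pose s := H :: F.
have rc_off_0 : rank_cond_off rk (ord0 : 'I_(size s)).
  by apply/(@rank_cond_offE _ rk s F ord0) => // k; rewrite /bump leq0n.
have rk_H : 1 < rk (nth set0 s (ord0 : 'I_(size s))) by case: (rk2_G H H_G).
have rk_s : rk [set: T] <= size s by rewrite rkT /= size_F.
have [m m_core] := tight_core_excess rk_mono rk_submod rc_off_0 rk_H rk_s rc_G.
set Fm := nth set0 s m => excess_s.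
have excess_F : count_mem Fm G < count_mem Fm F.
  move: excess_s; rewrite /= -/Fm; case: eqVneq => [<- | _] //.
  by rewrite add1n ltnS leqNgt excess_H.
have Fm_F : Fm \in F by rewrite -has_pred1 has_count (leq_ltn_trans _ excess_F).
have size_HF : size (H :: rem Fm F) = size F by rewrite /= size_rem // prednK size_F.
exists Fm => //; split => //; split.
- by rewrite size_HF.
- by move=> X; rewrite inE => /predU1P[->|/mem_rem]; [exact: flat_G | exact: flat_F].
have p_lt : (index Fm F).+1 < size s by rewrite ltnS index_mem.
pose p := Ordinal p_lt.
apply/(@rank_cond_offE _ rk s _ p) => [|[|k] //=|].
- exact: size_HF.
- by rewrite bumpS nth_rem.
- apply: rank_cond_off_swap (rank_cond_off_tight_core rc_off_0 m_core).
  by rewrite /= nth_index.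
Qed.
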